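(* Let $G$ be an abstract $k$-molecule and let $A_k,B_k\subseteq V_G$ be such that both $(G,A_k)$ and $(G,B_k)$ are $k$-premolecules. Then (i) the subgraphs of $G$ induced by $A_k\setminus B_k$, by $B_k\setminus A_k$ and by $V_G\setminus(A_k\cup B_k)$ are all discrete (edgeless), and (ii) the subgraphs of $G$ induced by $A_k$ and by $B_k$ are isomorphic.
   Context: Graphs are finite and undirected; the connectivity of a graph is the largest $k$ such that one must remove at least $k$ vertices to disconnect it (by convention $K_m$, $m\ge3$, has connectivity $m-1$). $k$-molecule: for $k,h\ge1$, $B=\{b_1,\dots,b_k\}$ and a set $\mathcal B$ of edges among vertices of $B$, $\vartheta_{B}^{\mathcal B,h}$ is the graph with vertex set $B\cup\{v_1,\dots,v_h\}$ and edge set $\mathcal B\cup\{v_ib_j:1\le i\le h,1\le j\le k\}$, where $h\ge k-k'$, $k'$ being the connectivity of the subgraph induced by $B$. For a graph $G$ and $A\subseteq V_G$ with $|A|=k$, $(G,A)$ is a $k$-premolecule if there is a $k$-molecule $\vartheta_{B}^{\mathcal B,h}$ and an isomorphism $G\to\vartheta_{B}^{\mathcal B,h}$ mapping $A$ onto $B$; $G$ is an abstract $k$-molecule if such an $A$ exists. *)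

From mathcomp Require Import all_boot.
Set Implicit Arguments. Unset Strict Implicit. Unset Printing Implicit Defensive.

(* A finite simple graph: vertex type T : finType, adjacency e : rel T,
   assumed symmetric and irreflexive where used. *)

Definition restr_rel (T : finType) (e : rel T) (W : {set T}) : rel T :=
  [rel x y | [&& e x y, x \in W & y \in W]].

Definition disconnected_on (T : finType) (e : rel T) (W : {set T}) : bool :=
  [exists x in W, exists y in W, ~~ connect (restr_rel e W) x y].

(* connectivity of the subgraph induced by W: the least number of vertices
   whose removal disconnects it or leaves at most one vertex
   (so K_m has connectivity m-1). *)
Definition kappa (T : finType) (e : rel T) (W : {set T}) : nat :=
  \big[minn/#|W|]_(S : {set T} | (S \subset W) &&
        ((#|W :\: S| <= 1) || disconnected_on e (W :\: S))) #|S|.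

(* the k-molecule theta_B^{calB,h} with B = 'I_k (inl) and v_1..v_h = 'I_h (inr) *)
Definition mol_rel (k h : nat) (be : rel 'I_k) : rel ('I_k + 'I_h)%type :=
  fun u v => match u, v with
             | inl a, inl b => be a b
             | inl _, inr _ => true
             | inr _, inl _ => true
             | inr _, inr _ => false
             end.

Definition is_inl (X Y : Type) (u : X + Y) : bool :=
  if u is inl _ then true else false.

Definition premolecule (T : finType) (e : rel T) (k : nat) (A : {set T}) : Prop :=
  #|A| = k /\
  exists (h : nat) (be : rel 'I_k),
    [/\ 1 <= k /\ 1 <= h, symmetric be, irreflexive be,
        k - kappa be [set: 'I_k] <= h &
        exists phi : T -> ('I_k + 'I_h)%type,
          [/\ bijective phi,
              (forall x y, e x y = mol_rel be (phi x) (phi y)) &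
              (forall x, (x \in A) = is_inl (phi x))]].

Definition abstract_molecule (T : finType) (e : rel T) (k : nat) : Prop :=
  exists A : {set T}, premolecule e k A.

Definition edgeless_on (T : finType) (e : rel T) (S : {set T}) : Prop :=
  forall x y, x \in S -> y \in S -> ~~ e x y.

Definition induced_iso (T : finType) (e : rel T) (A B : {set T}) : Prop :=
  exists f : T -> T,
    [/\ {in A &, injective f}, f @: A = B &
        {in A &, forall x y, e (f x) (f y) = e x y}].

From mathcomp Require Import all_boot.

Set Implicit Arguments.
Unset Strict Implicit.
Unset Printing Implicit Defensive.

(* In a k-premolecule (G, A) every vertex outside A is adjacent to exactly the
   vertices of A.  Hence the complement of A is edgeless, which gives (i) since
   each of the three sets lies outside A or outside B.  For (ii), any
   bijection from A :\: B onto B :\: A, extended by the identity on A :&: B,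
   is an isomorphism of the induced subgraphs: a vertex of A :\: B is adjacent
   within A exactly to A :&: B, and so is a vertex of B :\: A within B. *)

Section Premolecule.

Variables (T : finType) (e : rel T) (k : nat) (A : {set T}).
Hypothesis premolA : premolecule e k A.

Lemma premolecule_adj_out u v : u \notin A -> e u v = (v \in A).
Proof.
case: premolA => _ [h [be [_ _ _ _ [phi [_ e_phi A_phi]]]]].
rewrite e_phi !A_phi /mol_rel.
by case: (phi u) => // _ _; case: (phi v).
Qed.

Lemma premolecule_edgeless_compl : edgeless_on e (~: A).
Proof.
by move=> x y; rewrite !inE => xA yA; rewrite premolecule_adj_out // (negbTE yA).
Qed.

End Premolecule.

Lemma edgeless_onS (T : finType) (e : rel T) (S S' : {set T}) :
  S \subset S' -> edgeless_on e S' -> edgeless_on e S.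
Proof. by move=> /subsetP sSS' eS' x y /sSS' xS' /sSS'; apply: eS'. Qed.

Lemma card_eq_bij_on (T : finType) (X Y : {set T}) :
  #|X| = #|Y| -> exists g : T -> T, {in X &, injective g} /\ g @: X = Y.
Proof.
move=> cXY; have sXY : size (enum X) = size (enum Y) by rewrite -!cardE.
pose g x := nth x (enum Y) (index x (enum X)).
have ltiX x : x \in X -> index x (enum X) < size (enum Y).
  by rewrite -sXY index_mem mem_enum.
have injg : {in X &, injective g}.
  move=> x y xX yX; rewrite /g (set_nth_default y x) ?ltiX //.
  move/eqP; rewrite nth_uniq ?enum_uniq ?ltiX // => /eqP eq_i.
  by rewrite -(nth_index x (_ : x \in enum X)) ?mem_enum // eq_i nth_index ?mem_enum.
exists g; split=> //; apply/eqP; rewrite eqEcard card_in_imset // cXY leqnn andbT.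
by apply/subsetP=> _ /imsetP[x xX ->]; rewrite -mem_enum mem_nth ?ltiX.
Qed.

Lemma card_eq_swap_bij (T : finType) (A B : {set T}) :
  #|A| = #|B| ->
  exists f : T -> T,
    [/\ {in A &, injective f}, f @: A = B, {in A :&: B, f =1 id}
      & {in A :\: B, forall x, f x \in B :\: A}].
Proof.
move=> cAB; have [|g [injg gAB]] := @card_eq_bij_on _ (A :\: B) (B :\: A).
  by rewrite !cardsD cAB setIC.
have gD x : x \in A :\: B -> g x \in B :\: A by move=> xD; rewrite -gAB imset_f.
pose f x := if x \in A :\: B then g x else x.
have fI : {in A :&: B, f =1 id}.
  by move=> x /setIP[_ xB]; rewrite /f inE xB.
have fD : {in A :\: B, forall x, f x \in B :\: A} by move=> x xD; rewrite /f xD gD.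
have injf : {in A &, injective f}.
  move=> x y xA yA; rewrite /f.
  case xD: (x \in A :\: B); case yD: (y \in A :\: B).
  - exact: injg.
  - by move=> gxy; have := gD x xD; rewrite gxy !inE yA.
  - by move=> xgy; have := gD y yD; rewrite -xgy !inE xA.
  - by [].
exists f; split=> //; apply/eqP; rewrite eqEcard card_in_imset // cAB leqnn andbT.
apply/subsetP=> _ /imsetP[x xA ->]; case xB: (x \in B).
  by rewrite fI ?inE ?xA.
by have := fD x; rewrite !inE xA xB => /(_ isT) /andP[].
Qed.

Lemma premolecule_swap_adj (T : finType) (e : rel T) (k : nat) (A B : {set T})
    (f : T -> T) :
  symmetric e -> premolecule e k A -> premolecule e k B ->
  {in A :&: B, f =1 id} -> {in A :\: B, forall x, f x \in B :\: A} ->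
  {in A &, forall x y, e (f x) (f y) = e x y}.
Proof.
move=> e_sym premolA premolB fI fD.
have adjA := premolecule_adj_out premolA; have adjB := premolecule_adj_out premolB.
have f_memA x : x \in A -> (f x \in A) = (x \in B).
  move=> xA; case xB: (x \in B); first by rewrite fI ?inE ?xA ?xB.
  by have := fD x; rewrite !inE xA xB => /(_ isT) /andP[/negbTE].
have adj_outB x y : x \in A -> x \notin B -> y \in A -> e (f x) (f y) = e x y.
  by move=> xA xB yA; rewrite (adjA (f x)) ?f_memA // (adjB x) // f_memA.
move=> x y xA yA; case xB: (x \in B); last by rewrite adj_outB ?xB.
case yB: (y \in B); last by rewrite e_sym [e x y]e_sym adj_outB ?yB.
by rewrite !fI ?inE ?xA ?xB ?yA ?yB.
Qed.

Theorem mainTheorem9 (T : finType) (e : rel T) (k : nat)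
  (e_sym : symmetric e) (e_irr : irreflexive e)
  (Gmol : abstract_molecule e k) (Ak Bk : {set T}) :
  premolecule e k Ak -> premolecule e k Bk ->
  (edgeless_on e (Ak :\: Bk) /\ edgeless_on e (Bk :\: Ak) /\
   edgeless_on e (~: (Ak :|: Bk))) /\
  induced_iso e Ak Bk.
Proof.
move=> premolA premolB.
have edgelessA := premolecule_edgeless_compl premolA.
have edgelessB := premolecule_edgeless_compl premolB.
split.
  split; last split.
  - by apply: edgeless_onS edgelessB; rewrite setDE subsetIr.
  - by apply: edgeless_onS edgelessA; rewrite setDE subsetIr.
  - by apply: edgeless_onS edgelessA; rewrite setCS subsetUl.
have [|f [injf fAB fI fD]] := @card_eq_swap_bij _ Ak Bk.
  by case: premolA premolB => -> _ [-> _].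
by exists f; split=> //; apply: premolecule_swap_adj premolA premolB fI fD.
Qed.
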